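(* Let $\gamma_1,\dots,\gamma_r>0$, and let $\mu:[0,\infty)\to\mathbb{R}$ be Lipschitz continuous with $\mu(t)\ge0$ for all $t\ge0$. Let $\varphi(t)$ solve $\dot\varphi=A_\gamma\varphi+B\mu(t)$ and set $\Delta\varphi(t)=\varphi(t)-\Gamma\mu(t)$. Then $\Delta\varphi(\cdot)$ stays bounded on $[0,\infty)$.
   Context: $A_\gamma$ is the $r\times r$ matrix with diagonal entries $-\gamma_1,\dots,-\gamma_r$, entries $1$ on the superdiagonal, and zeros elsewhere; $B=[0,\dots,0,1]^\top\in\mathbb{R}^r$; $\Gamma=-A_\gamma^{-1}B=[(\gamma_1\cdots\gamma_r)^{-1},(\gamma_2\cdots\gamma_r)^{-1},\dots,\gamma_r^{-1}]^\top$. *)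

From HB Require Import structures.
From mathcomp Require Import all_boot all_order all_algebra.
From mathcomp Require Import all_classical all_reals all_analysis.
Set Implicit Arguments. Unset Strict Implicit. Unset Printing Implicit Defensive.
Import Order.TTheory GRing.Theory Num.Theory.
Import numFieldNormedType.Exports.
Local Open Scope ring_scope.

Definition Agamma (R : pzRingType) (r : nat) (g : 'I_r -> R) : 'M[R]_r :=
  \matrix_(i < r, j < r)
    (if i == j then - g i else if (j : nat) == i.+1 then 1 else 0).

Definition Bvec (R : pzRingType) (r : nat) : 'cV[R]_r :=
  \col_(i < r) (if i.+1 == r then 1 else 0).

Definition Gammavec (R : fieldType) (r : nat) (g : 'I_r -> R) : 'cV[R]_r :=
  - (invmx (Agamma g) *m Bvec R r).

From HB Require Import structures.
From mathcomp Require Import all_boot all_order all_algebra.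
From mathcomp Require Import all_classical all_reals all_analysis.
From mathcomp Require Import ring lra.
Import Order.TTheory GRing.Theory Num.Theory.
Import numFieldNormedType.Exports.
Local Open Scope ring_scope.
Local Open Scope classical_set_scope.

(* Coordinatewise the system reads phi_i' = phi_(i+1) - gamma_i phi_i, with
   phi_(r+1) := mu, and gamma_i Gamma_i = Gamma_(i+1), with Gamma_(r+1) := 1.
   Each coordinate is thus a first-order lag y' = f - gamma y driven by f.  If f
   is Lipschitz from the left with constant L, the gap gamma y - f never exceeds
   |gamma y(0) - f(0)| + L/gamma: where the gap attains a larger maximum at
   c > 0, y decreases at rate more than L/gamma, which f cannot compensate, so
   the gap is even larger just before c.  A bounded gap bounds y', so y is
   Lipschitz in turn, and backward induction from i = r bounds every
   phi_i - Gamma_i mu, hence Delta phi. *)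

Lemma is_derive_quotientP {R : numFieldType} {V : normedModType R}
    (F : R -> V) (t : R) (D : V) :
  is_derive t 1 F D <-> (fun h : R => h^-1 *: (F (h + t) - F t)) @ 0^' --> D.
Proof.
have -> : (fun h : R => h^-1 *: (F (h + t) - F t)) =
    (fun h : R => h^-1 *: ((F \o shift t) (h *: 1) - F t)).
  by apply/funext => h /=; rewrite [h%:A]mulr1.
split=> [FD | FD].
  rewrite -(@derive_val _ _ _ _ _ _ _ FD); exact: (@ex_derive _ _ _ _ _ _ _ FD).
by apply: DeriveDef; [apply/cvg_ex; exists D | exact: cvg_lim FD].
Qed.

Lemma is_derive_coord {R : numFieldType} {m n} {F : R -> 'M[R]_(m, n)} {t : R}
    {D : 'M[R]_(m, n)} (i : 'I_m) (j : 'I_n) :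
  is_derive t 1 F D -> is_derive t 1 (fun s => F s i j) (D i j).
Proof.
move=> /is_derive_quotientP FD; apply/is_derive_quotientP.
have -> : (fun h : R => h^-1 *: (F (h + t) i j - F t i j)) =
    (fun M : 'M[R]_(m, n) => M i j) \o (fun h => h^-1 *: (F (h + t) - F t)).
  by apply/funext => h /=; rewrite !mxE.
exact: cvg_comp FD (@coord_continuous R m n i j D).
Qed.

Definition left_lipschitz {R : realType} (L : R) (f : R -> R) :=
  forall t, 0 < t -> \forall h \near 0^'+, `|f (t - h) - f t| <= L * h.

Section LeftLipschitz.
Context {R : realType}.
Implicit Types (y f : R -> R) (k M s t : R).

Lemma is_derive_left_lt {y} {c d b : R} : is_derive c 1 y d -> d < b ->
  \forall h \near 0^'+, y c - y (c - h) < b * h.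
Proof.
move=> yd db.
have dq := (is_derive_quotientP _ _ _).1 yd.
have := @cvgr_lt R _ _ _ _ _ (cvg_dnbhs_at_left dq) b db.
move=> /(_ (at_left_proper_filter 0)); rewrite -nbhs_right_leftP oppr0 => dq_lt.
near=> h.
have h0 : 0 < h by near: h; exact: nbhs_right_gt.
have := near dq_lt h; rewrite /= invrN scaleNr -scalerN opprB (addrC (- h)).
by rewrite -[_ *: _]/(_ * _) mulrC ltr_pdivrMr // => ->.
Unshelve. all: by end_near. Qed.

Lemma is_derive_left_lipschitz {y} {c d b : R} : is_derive c 1 y d -> `|d| < b ->
  \forall h \near 0^'+, `|y (c - h) - y c| <= b * h.
Proof.
move=> yd; rewrite ltr_norml => /andP[nbd db].
have yd_lt := is_derive_left_lt yd db.
have /(is_derive_left_lt (is_deriveN yd)) Nyd_lt : - d < b by rewrite ltrNl.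
near=> h; rewrite ler_norml; apply/andP; split.
  by rewrite lerNl opprB ltW //; near: h.
rewrite ltW //; near: h; apply: filterS Nyd_lt => h /=.
by rewrite opprK addrC.
Unshelve. all: by end_near. Qed.

Lemma bounded_derive_left_lipschitz y (d : R -> R) M :
  (forall t, 0 < t -> is_derive t 1 y (d t)) -> (forall t, 0 < t -> `|d t| <= M) ->
  left_lipschitz (M + 1) y.
Proof.
move=> yd dM t t0; apply: is_derive_left_lipschitz (yd t t0) _.
by rewrite (le_lt_trans (dM t t0)) // ltrDl.
Qed.

Lemma lipschitz_within_continuous (A : set R) f k :
  (forall s t, A s -> A t -> `|f s - f t| <= k * `|s - t|) -> {within A, continuous f}.
Proof.
move=> f_lip; apply/subspace_continuousP => s As.
have k1_gt0 : 0 < `|k| + 1 by rewrite ltr_pwDr.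
apply/cvgrPdist_le => e e0; rewrite near_withinE; near=> t => At.
apply: le_trans (f_lip s t As At) _.
apply: (@le_trans _ _ ((`|k| + 1) * `|s - t|)).
  by rewrite ler_wpM2r // (le_trans (ler_norm k)) // lerDl.
rewrite -ler_pdivlMl //; near: t.
by apply: cvgr_dist_le; [exact: cvg_id | rewrite mulr_gt0 ?invr_gt0].
Unshelve. all: by end_near. Qed.

Lemma lipschitz_left_lipschitz f k :
  (forall s t, 0 <= s -> 0 <= t -> `|f s - f t| <= k * `|s - t|) -> left_lipschitz k f.
Proof.
move=> f_lip t t0; near=> h.
have h0 : 0 < h by near: h; exact: nbhs_right_gt.
have ht : h <= t by near: h; exact: nbhs_right_le.
apply: le_trans (f_lip _ _ _ (ltW t0)) _; first by rewrite subr_ge0.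
by rewrite addrAC subrr add0r normrN gtr0_norm.
Unshelve. all: by end_near. Qed.
End LeftLipschitz.

Section FirstOrderLag.
Context {R : realType}.
Variables (gam L : R) (y f : R -> R).
Implicit Types t : R.
Hypotheses (gam_gt0 : 0 < gam) (L_ge0 : 0 <= L).
Hypotheses (y_cont : {within `[0, +oo[, continuous y})
  (f_cont : {within `[0, +oo[, continuous f}).
Hypothesis y_ode : forall t, 0 < t -> is_derive t 1 y (f t - gam * y t).
Hypothesis f_lip : left_lipschitz L f.

Let z t := gam * y t - f t.

Lemma lag_gap_le t : 0 <= t -> z t <= `|z 0| + L / gam.
Proof.
move=> t0.
have bound_ge : z 0 <= `|z 0| + L / gam.
  by rewrite -[leLHS]addr0 lerD ?real_ler_norm ?num_real // divr_ge0 // ltW.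
have z_cont : {within `[0, t], continuous z}.
  apply: continuous_subspaceW (_ : `[0, t] `<=` `[0, +oo[) _.
    by move=> s; rewrite /= !in_itv /= => /andP[->].
  by move=> s; apply: cvgB; [apply: cvgMl_tmp; exact: y_cont | exact: f_cont].
have [c c_in zmax] := EVT_max t0 z_cont.
apply: le_trans (zmax t _) _; first by rewrite in_itv /= t0 lexx.
move: c_in; rewrite in_itv /= => /andP[c0 ct].
have [-> //|c_neq0] := eqVneq c 0.
have c_gt0 : 0 < c by rewrite lt_def c_neq0.
rewrite leNgt; apply/negP => zc_big.
have : f c - gam * y c < - (L / gam).
  by rewrite -opprB ltrN2 (le_lt_trans _ zc_big) // lerDr.
move=> /(is_derive_left_lt (y_ode c c_gt0)) y_drop.
near (0 : R)^'+ => h.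
have h_gt0 : 0 < h by near: h; exact: nbhs_right_gt.
have h_le_c : h <= c by near: h; exact: nbhs_right_le.
have : z c < z (c - h).
  have dy : y c - y (c - h) < - (L / gam) * h by near: h.
  have df : `|f (c - h) - f c| <= L * h by near: h; exact: f_lip c c_gt0.
  have gam_dy : L * h < gam * (y (c - h) - y c).
    by rewrite -ltr_pdivrMl // mulrA (mulrC _ L) -opprB ltrNr -mulNr.
  have := le_trans (ler_norm _) df; rewrite /z; lra.
by rewrite ltNge zmax // in_itv /= subr_ge0 h_le_c (le_trans _ ct) // gerBl ltW.
Unshelve. all: by end_near. Qed.
End FirstOrderLag.

Lemma lag_gap_norm_le {R : realType} {gam L : R} {y f : R -> R} :
  0 < gam -> 0 <= L ->
  {within `[0, +oo[, continuous y} -> {within `[0, +oo[, continuous f} ->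
  (forall t : R, 0 < t -> is_derive t 1 y (f t - gam * y t)) -> left_lipschitz L f ->
  forall t : R, 0 <= t -> `|gam * y t - f t| <= `|gam * y 0 - f 0| + L / gam.
Proof.
move=> gam_gt0 L_ge0 y_cont f_cont y_ode f_lip t t0.
rewrite ler_norml lag_gap_le // andbT.
have oppE u v : gam * - u - - v = - (gam * u - v) by ring.
have Ny_cont : {within `[0, +oo[, continuous (fun s => - y s)}.
  by move=> s; apply: cvgN; exact: y_cont.
have Nf_cont : {within `[0, +oo[, continuous (fun s => - f s)}.
  by move=> s; apply: cvgN; exact: f_cont.
have Ny_ode (s : R) : 0 < s -> is_derive s 1 (fun s => - y s) (- f s - gam * - y s).
  by move=> s0; apply: is_derive_eq; [exact: is_deriveN (y_ode s s0) | ring].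
have Nf_lip : left_lipschitz L (fun s => - f s).
  by move=> s s0; apply: filterS (f_lip s s0) => h; rewrite -opprD normrN.
have := @lag_gap_le R gam L _ _ gam_gt0 L_ge0 Ny_cont Nf_cont Ny_ode Nf_lip t t0.
by rewrite !oppE normrN lerNl.
Qed.

Lemma Agamma_mulmx_coord {R : pzRingType} r (g : 'I_r -> R) (v : 'cV[R]_r) (i : 'I_r) :
  (Agamma g *m v) i ord0 =
    - g i * v i ord0 + (if (i.+1 < r)%N then v (insubd i i.+1) ord0 else 0).
Proof.
rewrite mxE (bigD1 i) //= mxE eqxx; congr (_ + _).
case: ifP => ir.
  have vE : val (insubd i i.+1) = i.+1 by rewrite val_insubd ir.
  rewrite (bigD1 (insubd i i.+1)) /=; last by rewrite -(inj_eq val_inj) vE gtn_eqF.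
  rewrite mxE ifN; last by rewrite -(inj_eq val_inj) vE eq_sym gtn_eqF.
  rewrite vE eqxx mul1r big1 ?addr0 // => j /andP[ji jn].
  rewrite mxE eq_sym (negbTE ji) ifN ?mul0r //.
  by apply: contra jn => /eqP jE; apply/eqP/val_inj; rewrite vE.
rewrite big1 // => j ji; rewrite mxE eq_sym (negbTE ji) ifN ?mul0r //.
by apply/eqP => jE; move: (ltn_ord j); rewrite jE ir.
Qed.

Section Gammavec.
Context {R : fieldType} {r : nat} {g : 'I_r -> R}.
Hypothesis g_neq0 : forall i, g i != 0.

Lemma Agamma_unitmx : Agamma g \in unitmx.
Proof.
rewrite unitmxE -det_tr det_trig.
  by rewrite unitfE prodf_seq_neq0; apply/allP => i _ /=; rewrite !mxE eqxx oppr_eq0.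
apply/is_trig_mxP => i j ij; rewrite !mxE ifN; last by rewrite neq_ltn ij orbT.
by rewrite ifN //; apply/negP => /eqP jE; move: ij; rewrite jE ltnNge leqnSn.
Qed.

Lemma Agamma_mulmx_Gammavec : Agamma g *m Gammavec g = - Bvec R r.
Proof. by rewrite /Gammavec mulmxN mulmxA mulmxV ?mul1mx // Agamma_unitmx. Qed.

Lemma Gammavec_rec (i : 'I_r) :
  g i * Gammavec g i ord0 =
    if (i.+1 < r)%N then Gammavec g (insubd i i.+1) ord0 else 1.
Proof.
have := congr1 (fun v : 'cV[R]_r => v i ord0) Agamma_mulmx_Gammavec.
rewrite /= Agamma_mulmx_coord [RHS]mxE [Bvec _ _ _ _]mxE mulNr.
case: ltnP => ir.
  by rewrite (ltn_eqF ir) oppr0 => /eqP; rewrite addrC subr_eq0 => /eqP.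
have -> : i.+1 == r by rewrite eqn_leq ir ltn_ord.
by rewrite addr0 => /oppr_inj.
Qed.
End Gammavec.

Lemma ord_rev_ind r (P : 'I_r -> Prop) :
  (forall i : 'I_r, ((i.+1 < r)%N -> P (insubd i i.+1)) -> P i) -> forall i, P i.
Proof.
move=> step i; have [n] := ubnP (r - i); elim: n i => // n IH i ri.
apply: step => ir; apply: IH; rewrite val_insubd ir.
by rewrite subnS -ltnS prednK ?subn_gt0.
Qed.

Lemma bounded_fin_family {R : realDomainType} {I : finType} {T : Type}
    {D : T -> Prop} {F : I -> T -> R} :
  (forall i, exists C, forall t, D t -> `|F i t| <= C) ->
  exists2 C, 0 <= C & forall i t, D t -> `|F i t| <= C.
Proof.
move=> /choice[C FC]; exists (\sum_i `|C i|) => [|i t Dt]; first exact: sumr_ge0.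
apply: le_trans (FC i t Dt) _; apply: le_trans (ler_norm _) _.
by rewrite (bigD1 i) //= lerDl sumr_ge0.
Qed.

Lemma mx_norm_le {R : realDomainType} m n (A : 'M[R]_(m, n)) (C : R) :
  0 <= C -> (forall i j, `|A i j| <= C) -> `|A| <= C.
Proof.
by move=> C0 AC; rewrite -[leLHS]/(mx_norm _) mx_normrE; apply: bigmax_le => // -[i j] _.
Qed.

Section DeviationFromEquilibrium.
Context {R : realType} {r : nat} {g : 'I_r -> R} {mu : R -> R} {k : R}
  {phi : R -> 'cV[R]_r}.
Hypotheses (g_gt0 : forall i, 0 < g i)
  (mu_lip : forall s t : R, 0 <= s -> 0 <= t -> `|mu s - mu t| <= k * `|s - t|)
  (phi_cont0 : phi x @[x --> 0^'+] --> phi 0)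
  (phi_ode : forall t : R, 0 < t ->
     is_derive t 1 phi (Agamma g *m phi t + mu t *: Bvec R r)).

Let y (i : 'I_r) (t : R) := phi t i ord0.
Let G (i : 'I_r) := Gammavec g i ord0.
Let input (i : 'I_r) (t : R) := if (i.+1 < r)%N then y (insubd i i.+1) t else mu t.

Lemma coord_ode i (t : R) : 0 < t -> is_derive t 1 (y i) (input i t - g i * y i t).
Proof.
move=> t0; apply: is_derive_eq; first exact: is_derive_coord i ord0 (phi_ode t t0).
rewrite mxE [in X in _ + X]mxE Agamma_mulmx_coord mxE /input mulNr.
case: ltnP => ir; first by rewrite (ltn_eqF ir) mulr0 addr0 addrC.
have -> : i.+1 == r by rewrite eqn_leq ir ltn_ord.
by rewrite mulr1 addr0 addrC.
Qed.

Lemma coord_cont i : {within `[0, +oo[, continuous (y i)}.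
Proof.
apply: derivable_oy_Rcontinuous_within_itvcy; split.
  move=> t; rewrite in_itv /= andbT => t0.
  exact: (@ex_derive _ _ _ _ _ _ _ (coord_ode i t t0)).
exact: cvg_comp phi_cont0 (@coord_continuous R r 1 i ord0 (phi 0)).
Qed.

Lemma mu_cont : {within `[0, +oo[, continuous mu}.
Proof.
apply: (@lipschitz_within_continuous _ _ _ k) => s t /=.
by move=> s0 t0; apply: mu_lip; [move: s0 | move: t0]; rewrite in_itv /= andbT.
Qed.

Lemma input_cont i : {within `[0, +oo[, continuous (input i)}.
Proof. by rewrite /input; case: (i.+1 < r)%N; [exact: coord_cont | exact: mu_cont]. Qed.

Let tracks (i : 'I_r) :=
  (exists C, forall t, 0 <= t -> `|y i t - mu t * G i| <= C) /\
  (exists2 L, 0 <= L & left_lipschitz L (y i)).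

Lemma tracks_of_input i :
  (exists2 L, 0 <= L & left_lipschitz L (input i)) ->
  (exists C, forall t, 0 <= t -> `|input i t - mu t * (g i * G i)| <= C) ->
  tracks i.
Proof.
move=> [L L0 input_lip] [C input_dev].
have gi_gt0 := g_gt0 i.
have gap := lag_gap_norm_le gi_gt0 L0 (coord_cont i) (input_cont i) (coord_ode i) input_lip.
set K := _ + L / g i in gap.
have K0 : 0 <= K by rewrite /K addr_ge0 // divr_ge0 // ltW.
split.
  exists ((K + C) / g i) => t t0.
  have -> : y i t - mu t * G i =
      ((g i * y i t - input i t) + (input i t - mu t * (g i * G i))) / g i.
    by field; rewrite gt_eqF.
  rewrite normrM normfV (gtr0_norm gi_gt0) ler_pM2r ?invr_gt0 //.
  by apply: le_trans (ler_normD _ _) _; apply: lerD; [exact: gap | exact: input_dev].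
exists (K + 1); first by rewrite addr_ge0.
apply: bounded_derive_left_lipschitz (coord_ode i) _ => t t0.
by rewrite distrC; exact: gap (ltW t0).
Qed.

Lemma coord_tracks i : tracks i.
Proof.
elim/ord_rev_ind: i => i IH; apply: tracks_of_input.
  rewrite /input; case ir : (i.+1 < r)%N; first by have [_] := IH ir.
  exists k; last exact: lipschitz_left_lipschitz.
  by have := mu_lip 1 0 ler01 (lexx 0); rewrite subr0 normr1 mulr1; exact: le_trans.
rewrite /G Gammavec_rec => [|j]; last by rewrite gt_eqF.
rewrite /input; case ir : (i.+1 < r)%N; first by have [[C]] := IH ir; exists C.
by exists 0 => t _; rewrite mulr1 subrr normr0.
Qed.

Lemma coord_deviation_bounded i :
  exists C, forall t, 0 <= t -> `|phi t i ord0 - mu t * Gammavec g i ord0| <= C.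
Proof. by have [] := coord_tracks i. Qed.
End DeviationFromEquilibrium.

Theorem lemma1 (R : realType) (r : nat) (g : 'I_r -> R) (mu : R -> R)
    (phi : R -> 'cV[R]_r) :
  (0 < r)%N ->
  (forall i, 0 < g i) ->
  (exists k : R, forall s t : R, 0 <= s -> 0 <= t -> `|mu s - mu t| <= k * `|s - t|) ->
  (forall t : R, 0 <= t -> 0 <= mu t) ->
  (phi x @[x --> 0^'+] --> phi 0) ->
  (forall t : R, 0 < t -> is_derive t 1 phi (Agamma g *m phi t + mu t *: Bvec R r)) ->
  exists M : R, forall t : R, 0 <= t -> `|phi t - mu t *: Gammavec g| <= M.
Proof.
move=> _ g_gt0 [k mu_lip] _ phi_cont0 phi_ode.
have [C C0 dev_le] := bounded_fin_family
  (coord_deviation_bounded g_gt0 mu_lip phi_cont0 phi_ode).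
exists C => t t0; apply: mx_norm_le C0 _ => i j.
suff -> : (phi t - mu t *: Gammavec g) i j = phi t i ord0 - mu t * Gammavec g i ord0.
  exact: dev_le.
by rewrite (ord1 j); move: (Gammavec g) => G; rewrite !mxE.
Qed.
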